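(* Let $S$ be a nontrivial subdirectly irreducible member of $\mathsf V(S_7)$. Then $S$ is a flat semiring with zero $0$, it has a least multiplicative ideal $I$ among the ideals different from $\{0\}$, and: $I$ has exactly two elements; $E(S)$ has at most two elements; if $|E(S)|=1$ then $S\in\mathbf N$; and if $|E(S)|=2$ then either $S$ is isomorphic to $M_2$ or $S$ contains a subsemiring isomorphic to $S_7$.
   Context: A flat semiring is an ai-semiring (semilattice $(S,+)$, semigroup $(S,\cdot)$, distributive laws) whose multiplicative reduct has a zero element $0$ and in which $x+y=0$ for all distinct $x,y$. $S_7$ is the ai-semiring on $\{\infty,a,1\}$ with $x+x=x$, $x+y=\infty$ for $x\neq y$, and commutative multiplication with $\infty$ a zero, $a\cdot a=\infty$, $a\cdot 1=a$, $1\cdot1=1$; $\mathsf V(S_7)$ is the variety it generates. $M_2$ is the two-element flat semiring $\{1,0\}$ with $1\cdot1=1$. $E(S)$ denotes the set of multiplicative idempotents of $S$. $\mathbf N$ denotes the subvariety of $\mathsf V(S_7)$ defined by the identity $x^2y\approx x^2$. A multiplicative ideal is a subset $J$ with $SJ\cup JS\subseteq J$. *)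

Record Ops := mkOps { car :> Type; add : car -> car -> car; mul : car -> car -> car }.

Definition is_ai_semiring (S : Ops) : Prop :=
  (forall x y z : S, add S x (add S y z) = add S (add S x y) z) /\
  (forall x y : S, add S x y = add S y x) /\
  (forall x : S, add S x x = x) /\
  (forall x y z : S, mul S x (mul S y z) = mul S (mul S x y) z) /\
  (forall x y z : S, mul S x (add S y z) = add S (mul S x y) (mul S x z)) /\
  (forall x y z : S, mul S (add S x y) z = add S (mul S x z) (mul S y z)).

Inductive term : Type :=
| Var : nat -> term
| TAdd : term -> term -> term
| TMul : term -> term -> term.

Fixpoint eval (S : Ops) (v : nat -> S) (t : term) : S :=
  match t with
  | Var n => v n
  | TAdd p q => add S (eval S v p) (eval S v q)
  | TMul p q => mul S (eval S v p) (eval S v q)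
  end.

Definition satisfies (S : Ops) (p q : term) : Prop :=
  forall v : nat -> S, eval S v p = eval S v q.

Inductive s7 : Type := S7inf | S7a | S7one.

Definition s7_eqb (x y : s7) : bool :=
  match x, y with
  | S7inf, S7inf | S7a, S7a | S7one, S7one => true
  | _, _ => false
  end.

Definition s7_add (x y : s7) : s7 := if s7_eqb x y then x else S7inf.

Definition s7_mul (x y : s7) : s7 :=
  match x, y with
  | S7one, S7one => S7one
  | S7a, S7one | S7one, S7a => S7a
  | _, _ => S7inf
  end.

Definition S7 : Ops := mkOps s7 s7_add s7_mul.

Inductive m2 : Type := M2one | M2zero.

Definition m2_add (x y : m2) : m2 :=
  match x, y with M2one, M2one => M2one | _, _ => M2zero end.

Definition m2_mul (x y : m2) : m2 :=
  match x, y with M2one, M2one => M2one | _, _ => M2zero end.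

Definition M2 : Ops := mkOps m2 m2_add m2_mul.

(* Membership in the variety V(S_7) generated by S_7: S satisfies every identity
   of S_7 (by Birkhoff's HSP theorem this is V(S_7) = HSP(S_7)). *)
Definition in_VS7 (S : Ops) : Prop :=
  forall p q : term, satisfies S7 p q -> satisfies S p q.

Definition in_N (S : Ops) : Prop :=
  in_VS7 S /\
  satisfies S (TMul (TMul (Var 0) (Var 0)) (Var 1)) (TMul (Var 0) (Var 0)).

Definition congruence (S : Ops) (R : S -> S -> Prop) : Prop :=
  (forall x, R x x) /\ (forall x y, R x y -> R y x) /\
  (forall x y z, R x y -> R y z -> R x z) /\
  (forall x y u w, R x y -> R u w -> R (add S x u) (add S y w)) /\
  (forall x y u w, R x y -> R u w -> R (mul S x u) (mul S y w)).

Definition nontrivial (S : Ops) : Prop := exists x y : S, x <> y.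

Definition subdirectly_irreducible (S : Ops) : Prop :=
  nontrivial S /\
  exists a b : S, a <> b /\
    forall R, congruence S R -> (exists x y, R x y /\ x <> y) -> R a b.

Definition is_hom (S T : Ops) (f : S -> T) : Prop :=
  (forall x y, f (add S x y) = add T (f x) (f y)) /\
  (forall x y, f (mul S x y) = mul T (f x) (f y)).

Definition isomorphic (S T : Ops) : Prop :=
  exists f : S -> T, is_hom S T f /\
    (forall x y, f x = f y -> x = y) /\ (forall z, exists x, f x = z).

Definition contains_copy_of (S T : Ops) : Prop :=
  exists f : T -> S, is_hom T S f /\ (forall x y, f x = f y -> x = y).

Definition is_mul_zero (S : Ops) (z : S) : Prop :=
  forall x, mul S z x = z /\ mul S x z = z.

Definition flat_with_zero (S : Ops) (z : S) : Prop :=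
  is_ai_semiring S /\ is_mul_zero S z /\
  (forall x y : S, x <> y -> add S x y = z).

Definition mul_ideal (S : Ops) (J : S -> Prop) : Prop :=
  (exists x, J x) /\ (forall s x, J x -> J (mul S s x) /\ J (mul S x s)).

Definition idem (S : Ops) (e : S) : Prop := mul S e e = e.

From Stdlib Require Import Classical ClassicalEpsilon.

(* Take a monolith pair (c, d) with d not below c.  The syntactic congruence of
   the down-set of c separates c from d, so it is the identity.  Hence c is
   minimal, and every element except one, z, is carried onto c by some context
   x |-> k x; z is c c, or d when c is idempotent.  Then z is multiplicatively
   absorbing and the absorption identities of S_7 give x + y = z for x <> y,
   so S is flat.  In a flat member of V(S_7) each square is idempotent or z,
   a nonzero idempotent is a multiplicative identity (so there is at most one),
   and k c is c or z; thus {c, z} is the least ideal other than {z}, and the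
   remaining claims follow by inspecting E(S). *)

Local Notation "x ⊕ y" := (add _ x y) (at level 50, left associativity).
Local Notation "x ⊗ y" := (mul _ x y) (at level 40, left associativity).

#[local] Set Implicit Arguments.
Record S7_laws (S : Ops) : Prop := {
  addA : forall x y z : S, x ⊕ (y ⊕ z) = x ⊕ y ⊕ z;
  addC : forall x y : S, x ⊕ y = y ⊕ x;
  addxx : forall x : S, x ⊕ x = x;
  mulA : forall x y z : S, x ⊗ (y ⊗ z) = x ⊗ y ⊗ z;
  mulC : forall x y : S, x ⊗ y = y ⊗ x;
  mulDr : forall x y z : S, x ⊗ (y ⊕ z) = x ⊗ y ⊕ x ⊗ z;
  mul_cube : forall x : S, x ⊗ (x ⊗ x) = x ⊗ x;
  add_sqr : forall x : S, x ⊕ x ⊗ x = x ⊗ x;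
  sqrD : forall x y : S, (x ⊕ y) ⊗ (x ⊕ y) = x ⊗ x ⊗ (y ⊗ y);
  sqr_addE : forall x y : S, x ⊗ x ⊕ y = x ⊗ x ⊗ (y ⊗ y);
  sqr_mul_addE : forall x y : S, x ⊗ x ⊗ y ⊕ y = x ⊗ x ⊗ y;
  join_mul_swap : forall x y z : S, x ⊕ y ⊕ x ⊗ z = x ⊕ y ⊕ y ⊗ z;
  join_mulr_swap : forall x y z w : S,
    (x ⊕ y) ⊗ z ⊕ x ⊗ w = (x ⊕ y) ⊗ z ⊕ y ⊗ w;
  join_mul_add_swap : forall x y z : S, (x ⊕ y) ⊗ z ⊕ x = (x ⊕ y) ⊗ z ⊕ y
}.
#[local] Unset Implicit Arguments.

Definition env4 {S : Ops} (x y z w : S) (n : nat) : S :=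
  match n with 0 => x | 1 => y | 2 => z | _ => w end.

Lemma S7_law {S : Ops} (HV : in_VS7 S) (p q : term) (x y z w : S) :
  satisfies S7 p q -> eval S (env4 x y z w) p = eval S (env4 x y z w) q.
Proof. intro Hpq. exact (HV p q Hpq _). Qed.

Ltac S7_check := let v := fresh "v" in
  intro v; simpl; destruct (v 0), (v 1), (v 2), (v 3); reflexivity.

Ltac by_S7 HV p q x y z w :=
  exact (S7_law HV p q x y z w ltac:(S7_check)).

Lemma in_VS7_laws {S : Ops} : in_VS7 S -> S7_laws S.
Proof.
  intro HV.
  pose (X0 := Var 0); pose (X1 := Var 1); pose (X2 := Var 2); pose (X3 := Var 3).
  constructor.
  - intros x y z. by_S7 HV (TAdd X0 (TAdd X1 X2)) (TAdd (TAdd X0 X1) X2) x y z x.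
  - intros x y. by_S7 HV (TAdd X0 X1) (TAdd X1 X0) x y x x.
  - intros x. by_S7 HV (TAdd X0 X0) X0 x x x x.
  - intros x y z. by_S7 HV (TMul X0 (TMul X1 X2)) (TMul (TMul X0 X1) X2) x y z x.
  - intros x y. by_S7 HV (TMul X0 X1) (TMul X1 X0) x y x x.
  - intros x y z.
    by_S7 HV (TMul X0 (TAdd X1 X2)) (TAdd (TMul X0 X1) (TMul X0 X2)) x y z x.
  - intros x. by_S7 HV (TMul X0 (TMul X0 X0)) (TMul X0 X0) x x x x.
  - intros x. by_S7 HV (TAdd X0 (TMul X0 X0)) (TMul X0 X0) x x x x.
  - intros x y.
    by_S7 HV (TMul (TAdd X0 X1) (TAdd X0 X1)) (TMul (TMul X0 X0) (TMul X1 X1)) x y x x.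
  - intros x y.
    by_S7 HV (TAdd (TMul X0 X0) X1) (TMul (TMul X0 X0) (TMul X1 X1)) x y x x.
  - intros x y.
    by_S7 HV (TAdd (TMul (TMul X0 X0) X1) X1) (TMul (TMul X0 X0) X1) x y x x.
  - intros x y z.
    by_S7 HV (TAdd (TAdd X0 X1) (TMul X0 X2)) (TAdd (TAdd X0 X1) (TMul X1 X2)) x y z x.
  - intros x y z w.
    by_S7 HV (TAdd (TMul (TAdd X0 X1) X2) (TMul X0 X3))
             (TAdd (TMul (TAdd X0 X1) X2) (TMul X1 X3)) x y z w.
  - intros x y z.
    by_S7 HV (TAdd (TMul (TAdd X0 X1) X2) X0) (TAdd (TMul (TAdd X0 X1) X2) X1) x y z x.
Qed.

Section Laws.

Context {S : Ops} (L : S7_laws S).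

Lemma mulCA (x y z : S) : x ⊗ (y ⊗ z) = y ⊗ (x ⊗ z).
Proof. rewrite (mulA L), (mulC L x y), <- (mulA L). reflexivity. Qed.

Lemma sqrM (x y : S) : x ⊗ y ⊗ (x ⊗ y) = x ⊗ x ⊗ (y ⊗ y).
Proof. rewrite <- !(mulA L), (mulCA y x y). reflexivity. Qed.

Lemma sqr_idem (x : S) : x ⊗ x ⊗ (x ⊗ x) = x ⊗ x.
Proof. rewrite <- (mulA L), !(mul_cube L). reflexivity. Qed.

Definition le (x y : S) : Prop := x ⊕ y = y.

Lemma le_refl (x : S) : le x x.
Proof. apply (addxx L). Qed.

Lemma le_trans (x y w : S) : le x y -> le y w -> le x w.
Proof. unfold le; intros Hxy Hyw. rewrite <- Hyw, (addA L), Hxy. reflexivity. Qed.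

Lemma le_antisym {x y : S} : le x y -> le y x -> x = y.
Proof. unfold le; intros Hxy Hyx. rewrite <- Hxy, (addC L). exact (eq_sym Hyx). Qed.

Lemma le_addl (x y : S) : le x (x ⊕ y).
Proof. unfold le. rewrite (addA L), (addxx L). reflexivity. Qed.

Lemma le_addr (x y : S) : le y (x ⊕ y).
Proof. rewrite (addC L). apply le_addl. Qed.

Lemma le_add_iff (x y w : S) : le (x ⊕ y) w <-> le x w /\ le y w.
Proof.
  split.
  - intro Hw. split; eapply le_trans; [apply le_addl | exact Hw | apply le_addr | exact Hw].
  - unfold le; intros [Hx Hy]. rewrite <- (addA L), Hy, Hx. reflexivity.
Qed.

Lemma le_mul2l (k x y : S) : le x y -> le (k ⊗ x) (k ⊗ y).
Proof. unfold le; intro Hxy. rewrite <- (mulDr L), Hxy. reflexivity. Qed.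

Definition ctx (k : option S) (x : S) : S :=
  match k with None => x | Some k => k ⊗ x end.

Lemma ctx_le (k : option S) (x y : S) : le x y -> le (ctx k x) (ctx k y).
Proof. destruct k; simpl; auto using le_mul2l. Qed.

Lemma ctx_add (k : option S) (x y : S) : ctx k (x ⊕ y) = ctx k x ⊕ ctx k y.
Proof. destruct k; simpl; [apply (mulDr L) | reflexivity]. Qed.

Lemma ctx_mulr (k : option S) (x y : S) : ctx k (x ⊗ y) = ctx k y ⊗ x.
Proof. destruct k; simpl; [rewrite (mulC L x y); apply (mulA L) | apply (mulC L)]. Qed.

Lemma ctx_mull (k : option S) (x y : S) : ctx k (x ⊗ y) = ctx k x ⊗ y.
Proof. destruct k; simpl; [apply (mulA L) | reflexivity]. Qed.

(* The syntactic congruence of the down-set of [c]: by commutativity and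
   distributivity the contexts [ctx k] are all the unary polynomials needed. *)
Definition synt (c x y : S) : Prop :=
  forall k : option S, le (ctx k x) c <-> le (ctx k y) c.

Lemma synt_congruence (c : S) : congruence S (synt c).
Proof.
  unfold synt; split; [|split; [|split; [|split]]].
  - intros x k; tauto.
  - intros x y Hxy k; specialize (Hxy k); tauto.
  - intros x y w Hxy Hyw k; specialize (Hxy k); specialize (Hyw k); tauto.
  - intros x y u w Hxy Huw k. rewrite !ctx_add, !le_add_iff.
    specialize (Hxy k); specialize (Huw k); tauto.
  - intros x y u w Hxy Huw k.
    rewrite (ctx_mulr k x u).
    change (ctx k u ⊗ x) with (ctx (Some (ctx k u)) x).
    rewrite (Hxy (Some (ctx k u))); simpl.
    rewrite <- (ctx_mulr k y u), (ctx_mull k y u).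
    change (ctx k y ⊗ u) with (ctx (Some (ctx k y)) u).
    rewrite (Huw (Some (ctx k y))); simpl.
    rewrite <- (ctx_mull k y w). tauto.
Qed.

Lemma sqr_congruence : congruence S (fun x y => x ⊗ x = y ⊗ y).
Proof.
  split; [|split; [|split; [|split]]].
  - reflexivity.
  - intros x y; apply eq_sym.
  - intros x y w; apply eq_trans.
  - intros x y u w Hxy Huw. rewrite !(sqrD L), Hxy, Huw. reflexivity.
  - intros x y u w Hxy Huw. rewrite !sqrM, Hxy, Huw. reflexivity.
Qed.

Definition monolith_pair (a b : S) : Prop :=
  forall R, congruence S R -> (exists x y, R x y /\ x <> y) -> R a b.

Lemma monolith_not_le : subdirectly_irreducible S ->
  exists c d : S, ~ le d c /\ monolith_pair c d.
Proof.
  intros [_ [a [b [Hab Hmono]]]].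
  destruct (classic (le a b)) as [Hab_le|Hab_nle].
  - exists a, b. split; [|exact Hmono].
    intro Hba. exact (Hab (le_antisym Hab_le Hba)).
  - exists b, a. split; [exact Hab_nle|].
    intros R HR Hne. pose proof HR as [_ [Hsym _]]. exact (Hsym _ _ (Hmono R HR Hne)).
Qed.

Lemma synt_discrete {c d : S} : ~ le d c -> monolith_pair c d ->
  forall x y, synt c x y -> x = y.
Proof.
  intros Hdc Hmono x y Hxy. apply NNPP; intro Hne. apply Hdc.
  apply (Hmono (synt c) (synt_congruence c) (ex_intro _ x (ex_intro _ y (conj Hxy Hne)))
           None).
  apply le_refl.
Qed.

Section Monolith.

Context {c : S}.
Hypothesis synt_c_discrete : forall x y, synt c x y -> x = y.

Lemma le_c_eq {x : S} : le x c -> x = c.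
Proof.
  intro Hx. apply synt_c_discrete. intros [k|]; simpl; split; intro Hk.
  - pose proof (join_mul_swap L x c k) as E. unfold le in *.
    rewrite Hx, (mulC L x k), (addC L c (k ⊗ x)), Hk, (mulC L c k) in E.
    rewrite (addC L). exact (eq_sym E).
  - eapply le_trans; [apply le_mul2l; exact Hx | exact Hk].
  - apply le_refl.
  - exact Hx.
Qed.

Lemma le_reach_eq {x u : S} : le x u -> (exists k, le (ctx k u) c) -> x = u.
Proof.
  intros Hxu [[s|] Hs]; simpl in Hs.
  - apply synt_c_discrete. intro k.
    split; intro Hk; [|eapply le_trans; [apply ctx_le; exact Hxu | exact Hk]].
    rewrite (mulC L) in Hs. destruct k as [t|]; simpl in *.
    + pose proof (join_mulr_swap L x u s t) as E. unfold le in Hxu. rewrite Hxu in E.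
      assert (Hle : le (u ⊗ s ⊕ x ⊗ t) c).
      { apply le_add_iff. split; [exact Hs | rewrite (mulC L); exact Hk]. }
      rewrite E, le_add_iff in Hle. rewrite (mulC L). apply Hle.
    + pose proof (join_mul_add_swap L x u s) as E. unfold le in Hxu. rewrite Hxu in E.
      assert (Hle : le (u ⊗ s ⊕ x) c) by (apply le_add_iff; split; assumption).
      rewrite E, le_add_iff in Hle. apply Hle.
  - assert (Hx : le x c) by (eapply le_trans; eassumption).
    rewrite (le_c_eq Hx), (le_c_eq Hs). reflexivity.
Qed.

Lemma sqr_unreach : c ⊗ c <> c -> forall k, ~ le (ctx k (c ⊗ c)) c.
Proof.
  intros Hcc [k|] Hk; simpl in Hk; apply le_c_eq in Hk; [|exact (Hcc Hk)].
  assert (E : c ⊗ c ⊗ (k ⊗ (c ⊗ c)) = k ⊗ (c ⊗ c)) by (rewrite mulCA, sqr_idem; reflexivity).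
  rewrite Hk, (mulC L), (mul_cube L) in E. exact (Hcc E).
Qed.

(* If c is idempotent, the squaring congruence must be the identity, so every
   element is idempotent and addition coincides with multiplication. *)
Lemma idem_unreach {d : S} : c ⊗ c = c -> ~ le d c -> monolith_pair c d ->
  forall k, ~ le (ctx k d) c.
Proof.
  intros Hcc Hdc Hmono.
  assert (Hsqr_inj : forall x y : S, x ⊗ x = y ⊗ y -> x = y).
  { intros x y Hxy. apply NNPP; intro Hne. apply Hdc.
    pose proof (Hmono _ sqr_congruence (ex_intro _ x (ex_intro _ y (conj Hxy Hne))))
      as Hcd.
    cbv beta in Hcd. unfold le. rewrite <- Hcc, Hcd. apply (add_sqr L). }
  assert (Hidem : forall x : S, x ⊗ x = x) by (intro x; apply Hsqr_inj, sqr_idem).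
  assert (Hadd_mul : forall x y : S, x ⊕ y = x ⊗ y).
  { intros x y. rewrite <- (Hidem x) at 1. rewrite (sqr_addE L), !Hidem. reflexivity. }
  intros [k|] Hk; simpl in Hk; [|exact (Hdc Hk)].
  apply Hdc. rewrite <- (le_c_eq Hk), <- Hadd_mul. apply le_addr.
Qed.

Lemma exists_unreach {d : S} : ~ le d c -> monolith_pair c d ->
  exists z, forall k, ~ le (ctx k z) c.
Proof.
  intros Hdc Hmono. destruct (classic (c ⊗ c = c)) as [Hcc|Hcc].
  - exists d. exact (idem_unreach Hcc Hdc Hmono).
  - exists (c ⊗ c). exact (sqr_unreach Hcc).
Qed.

Context {z : S}.
Hypothesis z_unreach : forall k, ~ le (ctx k z) c.

Lemma unreach_mull (x : S) : z ⊗ x = z.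
Proof.
  apply synt_c_discrete. intro k. split; intro Hk; exfalso.
  - rewrite ctx_mulr in Hk. exact (z_unreach (Some (ctx k x)) Hk).
  - exact (z_unreach k Hk).
Qed.

Lemma unreach_neq_c : c <> z.
Proof. intro Hcz. apply (z_unreach None). simpl. rewrite <- Hcz. apply le_refl. Qed.

Lemma reach_c (u : S) : u <> z -> exists k, ctx k u = c.
Proof.
  intro Hu. destruct (classic (exists k, le (ctx k u) c)) as [[k Hk]|Hn].
  - exists k. exact (le_c_eq Hk).
  - exfalso. apply Hu, synt_c_discrete. intro k.
    split; intro Hk; exfalso; [exact (Hn (ex_intro _ k Hk)) | exact (z_unreach k Hk)].
Qed.

Lemma add_neq (x y : S) : x <> y -> x ⊕ y = z.
Proof.
  intro Hxy. apply NNPP; intro Hn. apply Hxy.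
  destruct (reach_c _ Hn) as [k Hk].
  assert (Hreach : exists k, le (ctx k (x ⊕ y)) c) by (exists k; rewrite Hk; apply le_refl).
  rewrite (le_reach_eq (le_addl x y) Hreach). exact (eq_sym (le_reach_eq (le_addr x y) Hreach)).
Qed.

End Monolith.

Section Flat.

Context {c z : S}.
Hypothesis Hreach : forall u, u <> z -> exists k, ctx k u = c.
Hypothesis Hz_mull : forall x, z ⊗ x = z.
Hypothesis Hcz : c <> z.
Hypothesis Hflat : forall x y, x <> y -> x ⊕ y = z.

Lemma z_mulr (x : S) : x ⊗ z = z.
Proof. rewrite (mulC L). apply Hz_mull. Qed.

Lemma z_addl (x : S) : x ⊕ z = z.
Proof.
  destruct (classic (x = z)) as [->|Hxz]; [apply (addxx L) | exact (Hflat _ _ Hxz)].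
Qed.

Lemma z_addr (x : S) : z ⊕ x = z.
Proof. rewrite (addC L). apply z_addl. Qed.

Lemma sqr_cases (x : S) : x ⊗ x = x \/ x ⊗ x = z.
Proof.
  destruct (classic (x = x ⊗ x)) as [Hx|Hx]; [left; exact (eq_sym Hx) | right].
  rewrite <- (Hflat _ _ Hx). exact (eq_sym (add_sqr L x)).
Qed.

Lemma idem_mul_c {e : S} : e ⊗ e = e -> e <> z -> e ⊗ c = c.
Proof.
  intros He Hez. destruct (Hreach _ Hez) as [[k|] Hk]; simpl in Hk; rewrite <- Hk.
  - rewrite mulCA, He. reflexivity.
  - exact He.
Qed.

Lemma idem_unique {e f : S} : e ⊗ e = e -> f ⊗ f = f -> e <> z -> f <> z -> e = f.
Proof.
  intros He Hf Hez Hfz. apply NNPP; intro Hne. apply Hcz.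
  assert (Hef : e ⊗ f = z).
  { rewrite <- He at 1. rewrite <- Hf, <- (sqr_addE L), He. exact (Hflat _ _ Hne). }
  rewrite <- (idem_mul_c He Hez), <- (idem_mul_c Hf Hfz), (mulA L), Hef. apply Hz_mull.
Qed.

(* If k ⊗ c is neither c nor z, some m brings it back to c; then k is not
   nilpotent, hence idempotent by [sqr_cases], and so fixes c. *)
Lemma mul_c_cases (k : S) : k ⊗ c = c \/ k ⊗ c = z.
Proof.
  apply NNPP; intro Hn. apply not_or_and in Hn. destruct Hn as [Hkc Hkz].
  destruct (Hreach _ Hkz) as [[m|] Hm]; simpl in Hm; [|exact (Hkc Hm)].
  assert (Hk : k ⊗ k <> z).
  { intro Hkk.
    assert (Hmk : m ⊗ k ⊗ c = c) by (rewrite <- (mulA L); exact Hm).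
    assert (Hmk2 : m ⊗ k ⊗ (m ⊗ k) ⊗ c = c) by (rewrite <- (mulA L), !Hmk; reflexivity).
    rewrite sqrM, Hkk, z_mulr, Hz_mull in Hmk2. exact (Hcz (eq_sym Hmk2)). }
  destruct (sqr_cases k) as [Hkk|Hkk]; [|exact (Hk Hkk)].
  apply Hkc, (idem_mul_c Hkk). intro Hkz'. apply Hk. rewrite Hkz'. apply Hz_mull.
Qed.

Lemma idem_mul_id {e : S} : e ⊗ e = e -> e <> z -> forall u, e ⊗ u = u.
Proof.
  intros He Hez u. apply NNPP; intro Hne.
  assert (Heu : e ⊗ u = z).
  { pose proof (sqr_mul_addE L e u) as E. rewrite He, (Hflat _ _ Hne) in E. exact (eq_sym E). }
  assert (Huz : u <> z) by (intros ->; exact (Hne (z_mulr e))).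
  apply Hcz. rewrite <- (idem_mul_c He Hez).
  destruct (Hreach _ Huz) as [[k|] Hk]; simpl in Hk; rewrite <- Hk.
  - rewrite mulCA, Heu. apply z_mulr.
  - exact Heu.
Qed.

Lemma flat_with_zero_z : is_ai_semiring S -> flat_with_zero S z.
Proof.
  intro HS. split; [exact HS|]. split; [|exact Hflat].
  intro x. split; [apply Hz_mull | apply z_mulr].
Qed.

Lemma least_nonzero_ideal :
  exists I : S -> Prop,
    mul_ideal S I /\ ~ (forall x, I x <-> x = z) /\
    (forall J : S -> Prop, mul_ideal S J -> ~ (forall x, J x <-> x = z) ->
       forall x, I x -> J x) /\
    (exists a b : S, a <> b /\ forall x, I x <-> (x = a \/ x = b)).
Proof.
  exists (fun x => x = c \/ x = z). split; [|split; [|split]].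
  - split; [exists c; left; reflexivity|]. intros s x [->| ->]; cbv beta.
    + rewrite (mulC L c s). destruct (mul_c_cases s) as [->| ->]; tauto.
    + rewrite Hz_mull, z_mulr. tauto.
  - intro Hn. apply Hcz, Hn. left; reflexivity.
  - intros J [[j Jj] HJ] HJz x Ix.
    assert (Jz : J z) by (rewrite <- (Hz_mull j); exact (proj1 (HJ z j Jj))).
    assert (Hj : exists j, J j /\ j <> z).
    { apply NNPP; intro Hn. apply HJz. intro y. split; intro Hy.
      - apply NNPP; intro Hyz. exact (Hn (ex_intro _ y (conj Hy Hyz))).
      - rewrite Hy; exact Jz. }
    destruct Hj as [j' [Jj' Hj'z]].
    assert (Jc : J c).
    { destruct (Hreach _ Hj'z) as [[k|] Hk]; simpl in Hk; rewrite <- Hk;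
        [exact (proj1 (HJ k j' Jj')) | exact Jj']. }
    destruct Ix as [->| ->]; assumption.
  - exists c, z. split; [exact Hcz | intro x; tauto].
Qed.

Lemma idem_eq_of_zero_iff {e f : S} :
  e ⊗ e = e -> f ⊗ f = f -> (e = z <-> f = z) -> e = f.
Proof.
  intros He Hf Hef. destruct (classic (e = z)) as [Hez|Hez].
  - rewrite Hez. exact (eq_sym (proj1 Hef Hez)).
  - apply (idem_unique He Hf Hez). intro Hfz. exact (Hez (proj2 Hef Hfz)).
Qed.

Lemma idem_at_most_two (e1 e2 e3 : S) : idem S e1 -> idem S e2 -> idem S e3 ->
  e1 = e2 \/ e1 = e3 \/ e2 = e3.
Proof.
  unfold idem; intros H1 H2 H3.
  destruct (classic (e1 = z)), (classic (e2 = z)), (classic (e3 = z));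
    first [ left; apply idem_eq_of_zero_iff; [assumption | assumption | tauto]
          | right; left; apply idem_eq_of_zero_iff; [assumption | assumption | tauto]
          | right; right; apply idem_eq_of_zero_iff; [assumption | assumption | tauto] ].
Qed.

Lemma single_idem_in_N :
  in_VS7 S -> (exists e, forall x, idem S x <-> x = e) -> in_N S.
Proof.
  intros HV [e He]. split; [exact HV|].
  assert (Hsqr : forall x : S, x ⊗ x = z).
  { intro x. rewrite (proj1 (He z) (Hz_mull z)). apply (proj1 (He (x ⊗ x))), sqr_idem. }
  intro v. simpl. rewrite Hsqr. apply Hz_mull.
Qed.

Lemma two_element_M2 {e : S} :
  e ⊗ e = e -> e <> z -> (forall x, x = z \/ x = e) -> isomorphic S M2.
Proof.
  intros He Hez Hall.
  pose (f x := if excluded_middle_informative (x = e) then M2one else M2zero).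
  assert (fe : f e = M2one)
    by (unfold f; destruct (excluded_middle_informative (e = e)); congruence).
  assert (fz : f z = M2zero)
    by (unfold f; destruct (excluded_middle_informative (z = e)); congruence).
  exists f. split; [split|split].
  - intros x y; destruct (Hall x) as [->| ->], (Hall y) as [->| ->];
      rewrite ?(addxx L), ?z_addl, ?z_addr, ?fe, ?fz; reflexivity.
  - intros x y; destruct (Hall x) as [->| ->], (Hall y) as [->| ->];
      rewrite ?He, ?Hz_mull, ?z_mulr, ?fe, ?fz; reflexivity.
  - intros x y; destruct (Hall x) as [->| ->], (Hall y) as [->| ->];
      rewrite ?fe, ?fz; congruence.
  - intros [|]; [exists e | exists z]; assumption.
Qed.

Lemma S7_copy {e w : S} :
  e ⊗ e = e -> e <> z -> w <> z -> w <> e -> contains_copy_of S S7.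
Proof.
  intros He Hez Hwz Hwe.
  assert (Hww : w ⊗ w = z).
  { destruct (sqr_cases w) as [Hw|Hw]; [|exact Hw].
    exfalso. exact (Hwe (idem_unique Hw He Hwz Hez)). }
  exists (fun t => match t with S7inf => z | S7a => w | S7one => e end).
  split; [split|].
  - intros x y; destruct x, y; simpl; symmetry;
      first [ apply (addxx L) | apply z_addl | apply z_addr | apply Hflat; congruence ].
  - intros x y; destruct x, y; simpl; symmetry;
      first [ apply Hz_mull | apply z_mulr | exact Hww | exact He
            | apply (idem_mul_id He Hez) | rewrite (mulC L); apply (idem_mul_id He Hez) ].
  - intros x y; destruct x, y; simpl; congruence.
Qed.

Lemma two_idem_M2_or_S7 :
  (exists e1 e2 : S, e1 <> e2 /\ forall x, idem S x <-> (x = e1 \/ x = e2)) ->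
  isomorphic S M2 \/ contains_copy_of S S7.
Proof.
  intros [e1 [e2 [Hne He]]].
  assert (Hex : exists e, e ⊗ e = e /\ e <> z).
  { destruct (classic (e1 = z)) as [->|H1z].
    - exists e2. split; [apply (proj2 (He e2)); right; reflexivity | exact (not_eq_sym Hne)].
    - exists e1. split; [apply (proj2 (He e1)); left; reflexivity | exact H1z]. }
  destruct Hex as [e [He' Hez]].
  destruct (classic (exists w, w <> z /\ w <> e)) as [[w [Hwz Hwe]]|Hno].
  - right. exact (S7_copy He' Hez Hwz Hwe).
  - left. apply (two_element_M2 He' Hez). intro x.
    destruct (classic (x = z)) as [Hx|Hx]; [left; exact Hx | right].
    apply NNPP; intro Hxe. exact (Hno (ex_intro _ x (conj Hx Hxe))).
Qed.

End Flat.

End Laws.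

Theorem theorem3p6 (S : Ops) :
  is_ai_semiring S -> in_VS7 S -> subdirectly_irreducible S ->
  exists z : S,
    flat_with_zero S z /\
    (exists I : S -> Prop,
       mul_ideal S I /\ ~ (forall x, I x <-> x = z) /\
       (forall J : S -> Prop, mul_ideal S J -> ~ (forall x, J x <-> x = z) ->
          forall x, I x -> J x) /\
       (exists a b : S, a <> b /\ forall x, I x <-> (x = a \/ x = b))) /\
    (forall e1 e2 e3 : S, idem S e1 -> idem S e2 -> idem S e3 ->
       e1 = e2 \/ e1 = e3 \/ e2 = e3) /\
    ((exists e : S, forall x, idem S x <-> x = e) -> in_N S) /\
    ((exists e1 e2 : S, e1 <> e2 /\ forall x, idem S x <-> (x = e1 \/ x = e2)) ->
       isomorphic S M2 \/ contains_copy_of S S7).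
Proof.
  intros HS HV HSI. pose proof (in_VS7_laws HV) as L.
  destruct (monolith_not_le L HSI) as [c [d [Hdc Hmono]]].
  pose proof (synt_discrete L Hdc Hmono) as Hdisc.
  destruct (exists_unreach L Hdisc Hdc Hmono) as [z Hz].
  pose proof (reach_c L Hdisc Hz) as Hreach.
  pose proof (unreach_mull L Hdisc Hz) as Hz_mull.
  pose proof (unreach_neq_c L Hz) as Hcz.
  pose proof (add_neq L Hdisc Hz) as Hflat.
  exists z. split; [|split; [|split; [|split]]].
  - exact (flat_with_zero_z L Hz_mull Hflat HS).
  - exact (least_nonzero_ideal L Hreach Hz_mull Hcz Hflat).
  - exact (idem_at_most_two L Hreach Hz_mull Hcz Hflat).
  - exact (single_idem_in_N L Hz_mull HV).
  - exact (two_idem_M2_or_S7 L Hreach Hz_mull Hcz Hflat).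
Qed.
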